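(* Let $\mu$ and $\pi$ be probability measures on a Polish space $\mathcal Y$ with metric $d$ of diameter $1$, and let $\mathcal D_\mu,\mathcal D_\pi\colon\mathcal Y\to[0,1]$. For $\rho>0$ set $$A_\rho=\{x\in\mathcal Y:\exists y\in\mathcal Y\text{ with }\mathcal D_\pi(y)>\mathcal D_\pi(x)+d(x,y)/\rho\},\qquad\bar A_\rho=\{x:d(x,A_\rho)\le\rho\}.$$ Assume $\delta,\varepsilon_1,\varepsilon_2$ satisfy $$\int\mathcal D_\pi\,d\pi\ge\delta,\quad\|\mu-\pi\|_d\le\varepsilon_1,\quad\sup_x|\mathcal D_\pi(x)-\mathcal D_\mu(x)|\le\varepsilon_2.$$ Define probability measures $\tilde\mu(A)=c_\mu\int_A\mathcal D_\mu\,d\mu$, $\tilde\pi(A)=c_\pi\int_A\mathcal D_\pi\,d\pi$ with normalising constants $c_\mu,c_\pi$. Then for every $\rho\le1$, $$\|\tilde\mu-\tilde\pi\|_d\le\frac1\delta\Bigl(\frac{3\varepsilon_1}\rho+\varepsilon_2+2\pi(\bar A_\rho)\Bigr).$$ In particular $\int\mathcal D_\mu\,d\mu>0$ whenever the right-hand side is strictly smaller than $1$.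
   Context: $\|\cdot\|_d$ denotes the Wasserstein-1 distance with respect to $d$: $\|\mu-\pi\|_d=\sup\{\int fd\mu-\int fd\pi: f\ \text{1-Lipschitz w.r.t. } d\}$. *)

From HB Require Import structures.
From mathcomp Require Import all_boot all_order all_algebra.
From mathcomp Require Import all_classical all_reals all_analysis.
Set Implicit Arguments. Unset Strict Implicit. Unset Printing Implicit Defensive.
Import Order.TTheory GRing.Theory Num.Theory.
Local Open Scope classical_set_scope.
Local Open Scope ring_scope.

Section Defs.
Context {R : realType} {T : Type}.
Variable d : T -> T -> R.

Definition is_metric : Prop :=
  [/\ forall x y, 0 <= d x y,
      forall x y, d x y = 0 <-> x = y,
      forall x y, d x y = d y x &
      forall x y z, d x z <= d x y + d y z].

Definition metric_separable : Prop :=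
  exists S : set T, countable S /\
    forall x (e : R), 0 < e -> exists2 s, S s & d x s < e.

Definition metric_complete : Prop :=
  forall u : nat -> T,
    (forall e : R, 0 < e -> exists N, forall m n, (N <= m)%N -> (N <= n)%N -> d (u m) (u n) < e) ->
    exists l, forall e : R, 0 < e -> exists N, forall n, (N <= n)%N -> d (u n) l < e.

Definition polish_metric : Prop :=
  [/\ is_metric, metric_separable & metric_complete].

Definition diameter_one : Prop :=
  (forall x y, d x y <= 1) /\
  (forall e : R, 0 < e -> exists x y, 1 - e < d x y).

Definition metric_open (U : set T) : Prop :=
  forall x, U x -> exists2 r : R, 0 < r & forall y, d x y < r -> U y.

(* distance from a point to a set (+oo for the empty set) *)
Definition dist_set (x : T) (A : set T) : \bar R :=
  ereal_inf [set (d x a)%:E | a in A].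

Definition lip1 (f : T -> R) : Prop := forall x y, `|f x - f y| <= d x y.
End Defs.

Definition wass {R : realType} {dsp} {T : measurableType dsp} (d : T -> T -> R)
  (m1 m2 : set T -> \bar R) : \bar R :=
  ereal_sup [set (\int[m1]_x (f x)%:E - \int[m2]_x (f x)%:E)%E | f in lip1 d].

Definition reweight {R : realType} {dsp} {T : measurableType dsp}
  (mu : set T -> \bar R) (D : T -> R) : set T -> \bar R :=
  fun A => ((fine (\int[mu]_x (D x)%:E))^-1%:E * \int[mu]_(x in A) (D x)%:E)%E.

Definition A_rho {R : realType} {T : Type} (d : T -> T -> R) (Dpi : T -> R) (rho : R) : set T :=
  [set x | exists y, Dpi y > Dpi x + d x y / rho].

Definition Abar_rho {R : realType} {T : Type} (d : T -> T -> R) (Dpi : T -> R) (rho : R) : set T :=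
  [set x | (dist_set d x (A_rho d Dpi rho) <= rho%:E)%E].

From HB Require Import structures.
From mathcomp Require Import all_boot all_order all_algebra.
From mathcomp Require Import all_classical all_reals all_analysis.
From mathcomp Require Import measurable_realfun.
From mathcomp Require Import ring lra.
Import Order.TTheory GRing.Theory Num.Theory.
Local Open Scope classical_set_scope.
Local Open Scope ring_scope.

(* For a 1-Lipschitz test function [f] let [a] and [b] be its [Dmu mu]- and [Dpi pi]-averages,
   [Z_pi := int Dpi dpi] and [g := a - f], so that [|g| <= 1], [int g Dmu dmu = 0] and
   [Z_pi (a - b) = int g Dpi dpi - int g Dmu dmu].  Write [Dpi = G + (Dpi - G)] with [G] the
   least [1/rho]-Lipschitz majorant of [Dpi]; it differs from [Dpi] only on [A_rho].  Then
   [g G] is [2/rho]-Lipschitz, so the Wasserstein bound costs [2 eps1/rho] on it; the error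
   [g (Dpi - G)] is dominated by the [1/rho]-Lipschitz majorant [S] of the indicator of
   [A_rho], and [S] vanishes off [Abar_rho], so its [pi]-integral is at most [pi(Abar_rho)] and
   its [mu]-integral at most [pi(Abar_rho) + eps1/rho]; replacing [Dmu] by [Dpi] costs [eps2].
   The same majorants give [int Dmu dmu >= Z_pi - 2 eps1/rho - pi(Abar_rho) - eps2]. *)

Definition dlipschitz {R : realType} {T : Type} (d : T -> T -> R) (K : R) (h : T -> R) :=
  forall x y, `|h x - h y| <= K * d x y.

Section lipschitz.
Context {R : realType} {T : Type} {d : T -> T -> R}.

Lemma lip1_dlipschitz {h} : lip1 d h -> dlipschitz d 1 h.
Proof. by move=> h1 x y; rewrite mul1r. Qed.

Lemma dlipschitz_lip1 {K h} : 0 < K -> dlipschitz d K h -> lip1 d (fun x => K^-1 * h x).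
Proof.
move=> K0 hK x y; rewrite -mulrBr normrM gtr0_norm ?invr_gt0 //.
by rewrite ler_pdivrMl // hK.
Qed.

Lemma dlipschitzN {K h} : dlipschitz d K h -> dlipschitz d K (fun x => - h x).
Proof. by move=> hK x y; rewrite -opprD normrN hK. Qed.

Lemma dlipschitzM {K1 K2 B1 B2 h1 h2} :
  (forall x, `|h1 x| <= B1) -> (forall x, `|h2 x| <= B2) ->
  dlipschitz d K1 h1 -> dlipschitz d K2 h2 ->
  dlipschitz d (B1 * K2 + B2 * K1) (fun x => h1 x * h2 x).
Proof.
move=> hB1 hB2 hK1 hK2 x y.
have -> : h1 x * h2 x - h1 y * h2 y = h1 x * (h2 x - h2 y) + h2 y * (h1 x - h1 y) by ring.
rewrite mulrDl -!mulrA; apply: le_trans (ler_normD _ _) _.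
by rewrite !normrM; apply: lerD; apply: ler_pM.
Qed.

End lipschitz.

Section metric.
Context {R : realType} {T : Type} {d : T -> T -> R}.
Hypothesis dm : is_metric d.

Lemma is_metric_ge0 x y : 0 <= d x y. Proof. by case: dm. Qed.
Lemma is_metric_xx x : d x x = 0. Proof. by case: dm => _ dP _ _; apply/dP. Qed.
Lemma is_metric_sym x y : d x y = d y x. Proof. by case: dm. Qed.
Lemma is_metric_triangle x y z : d x z <= d x y + d y z. Proof. by case: dm. Qed.

Lemma dlipschitz_subl {K} c {h} : dlipschitz d K h -> dlipschitz d K (fun x => c - h x).
Proof. by move=> hK x y; rewrite opprB addrC addrA subrK is_metric_sym. Qed.

End metric.

(* The least [r^-1]-Lipschitz function above [phi]. *)
Definition lip_majorant {R : realType} {T : Type} (d : T -> T -> R) (r : R) (phi : T -> R) x :=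
  sup (range (fun y => phi y - d x y / r)).

Section lip_majorant.
Context {R : realType} {T : Type} {d : T -> T -> R}.
Hypothesis dm : is_metric d.
Context {r : R} {phi : T -> R}.
Hypotheses (r_gt0 : 0 < r) (phi01 : forall x, 0 <= phi x <= 1).

Let dr_ge0 x y : 0 <= d x y / r.
Proof. by rewrite divr_ge0 ?is_metric_ge0 // ltW. Qed.

Lemma lip_majorant_ub x y : phi y - d x y / r <= lip_majorant d r phi x.
Proof.
apply: ub_le_sup; last by exists y.
exists 1 => _ [z _ <-]; have := dr_ge0 x z; have /andP[_] := phi01 z; lra.
Qed.

Lemma lip_majorant_le x b : (forall y, phi y - d x y / r <= b) -> lip_majorant d r phi x <= b.
Proof. by move=> hb; apply: ge_sup => [|_ [y _ <-]]; [exists (phi x - d x x / r); exists x|]. Qed.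

Lemma lip_majorant_ge x : phi x <= lip_majorant d r phi x.
Proof. by have := lip_majorant_ub x x; rewrite is_metric_xx // mul0r subr0. Qed.

Lemma lip_majorant_le1 x : lip_majorant d r phi x <= 1.
Proof. by apply: lip_majorant_le => y; have := dr_ge0 x y; have /andP[_] := phi01 y; lra. Qed.

Lemma lip_majorant_ge0 x : 0 <= lip_majorant d r phi x.
Proof. by apply: le_trans (lip_majorant_ge x); case/andP: (phi01 x). Qed.

Lemma dlipschitz_lip_majorant : dlipschitz d r^-1 (lip_majorant d r phi).
Proof.
suff ub x x' : lip_majorant d r phi x <= lip_majorant d r phi x' + d x x' / r.
  move=> x x'; rewrite mulrC ler_norml.
  by have := ub x x'; have := ub x' x; rewrite (is_metric_sym dm x'); lra.
apply: lip_majorant_le => y; have := lip_majorant_ub x' y.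
have : d x' y / r <= d x y / r + d x x' / r.
  by rewrite -mulrDl ler_pM2r ?invr_gt0 // addrC (is_metric_sym dm x x') is_metric_triangle.
lra.
Qed.

End lip_majorant.

Section bounded_measurable.
Context {R : realType} {dsp : measure_display} {T : measurableType dsp}.
Implicit Types h : T -> R.

Definition bounded_measurable h := measurable_fun setT h /\ exists M, forall x, `|h x| <= M.

Lemma bounded_measurable_cst k : bounded_measurable (fun=> k).
Proof. by split => //; exists `|k|. Qed.

Lemma bounded_measurableN h : bounded_measurable h -> bounded_measurable (fun x => - h x).
Proof. by case=> mh [M hM]; split; [exact: measurable_funN|exists M => x; rewrite normrN]. Qed.

Lemma bounded_measurableD h1 h2 : bounded_measurable h1 -> bounded_measurable h2 ->
  bounded_measurable (fun x => h1 x + h2 x).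
Proof.
move=> [m1 [M1 hM1]] [m2 [M2 hM2]]; split; first exact: measurable_funD.
by exists (M1 + M2) => x; apply: le_trans (ler_normD _ _) _; apply: lerD.
Qed.

Lemma bounded_measurableB h1 h2 : bounded_measurable h1 -> bounded_measurable h2 ->
  bounded_measurable (fun x => h1 x - h2 x).
Proof. by move=> b1 b2; apply: bounded_measurableD => //; exact: bounded_measurableN. Qed.

Lemma bounded_measurableM h1 h2 : bounded_measurable h1 -> bounded_measurable h2 ->
  bounded_measurable (fun x => h1 x * h2 x).
Proof.
move=> [m1 [M1 hM1]] [m2 [M2 hM2]]; split; first exact: measurable_funM.
by exists (M1 * M2) => x; rewrite normrM; apply: ler_pM.
Qed.

Lemma bounded_measurable01 h : measurable_fun setT h -> (forall x, 0 <= h x <= 1) ->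
  bounded_measurable h.
Proof. by move=> mh h01; split => //; exists 1 => x; have /andP[? ?] := h01 x; rewrite ger0_norm. Qed.

Lemma bounded_measurable_integrable (m : {finite_measure set T -> \bar R}) h :
  bounded_measurable h -> m.-integrable setT (EFin \o h).
Proof.
case=> mh [M hM]; apply/integrableP; split; first exact/measurable_EFinP.
apply: (@le_lt_trans _ _ (`|M|%:E * m setT)%E).
  apply: integral_le_bound => //; first by apply/measurableT_comp => //; exact/measurable_EFinP.
  by apply: aeW => x _ /=; rewrite lee_fin (le_trans (hM x)) // ler_norm.
by rewrite -ge0_fin_numE ?mule_ge0 // fin_numM // fin_num_measure.
Qed.

End bounded_measurable.

(* The [is_evar] guard matters: on an evar goal the closure lemmas would apply forever. *)
Ltac bounded_measurable_tac :=
  repeat match goal with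
  | |- bounded_measurable ?h =>
      first [ is_evar h; fail 1 | assumption | exact: bounded_measurable_cst
            | apply: bounded_measurableM | apply: bounded_measurableB
            | apply: bounded_measurableD | apply: bounded_measurableN ]
  end.

Section lipschitz_measurable.
Context {R : realType} {dsp : measure_display} {T : measurableType dsp} {d : T -> T -> R}.
Hypothesis hborel : @measurable _ T = <<s metric_open d >>.

Lemma dlipschitz_measurable {K h} : 0 < K -> dlipschitz d K h -> measurable_fun setT h.
Proof.
move=> K0 hK; apply: (measurability _ (RGenOInfty.measurableE R)).
move=> _ [_ [a ->] <-]; rewrite setTI hborel; apply: sub_sigma_algebra => x /=.
rewrite in_itv /= andbT => ax.
exists ((h x - a) / K); first by rewrite divr_gt0 // subr_gt0.
move=> y dxy; rewrite /= in_itv /= andbT.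
have : `|h x - h y| < h x - a by apply: le_lt_trans (hK x y) _; rewrite -ltr_pdivlMl // mulrC.
by rewrite ltr_norml => /andP[_]; lra.
Qed.

Lemma dlipschitz_bounded_measurable {K h} : diameter_one d ->
  0 < K -> dlipschitz d K h -> bounded_measurable h.
Proof.
move=> [d_le1 /(_ 1 ltr01)[x0 _]] K0 hK; split; first exact: dlipschitz_measurable hK.
exists (`|h x0| + K) => x; have := ler_normD (h x - h x0) (h x0); rewrite subrK.
have : `|h x - h x0| <= K by apply: le_trans (hK x x0) _; rewrite ler_piMr // ltW.
lra.
Qed.

End lipschitz_measurable.

Lemma Rintegral_cst_probability {R : realType} {dsp : measure_display}
  {T : measurableType dsp} (m : probability T R) (k : R) : \int[m]_x k = k.
Proof. by rewrite Rintegral_cst //= (probability_setT m) mulr1. Qed.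

Section Rintegral_bounded.
Context {R : realType} {dsp : measure_display} {T : measurableType dsp}.
Variable m : {finite_measure set T -> \bar R}.
Implicit Types h w : T -> R.

Lemma integral_bounded_measurable h : bounded_measurable h ->
  (\int[m]_x (h x)%:E)%E = (\int[m]_x h x)%:E.
Proof.
by move=> bh; rewrite fineK // integrable_fin_num // bounded_measurable_integrable.
Qed.

Lemma RintegralD_bounded h1 h2 : bounded_measurable h1 -> bounded_measurable h2 ->
  \int[m]_x (h1 x + h2 x) = \int[m]_x h1 x + \int[m]_x h2 x.
Proof. by move=> b1 b2; apply: RintegralD => //; exact: bounded_measurable_integrable. Qed.

Lemma RintegralB_bounded h1 h2 : bounded_measurable h1 -> bounded_measurable h2 ->
  \int[m]_x (h1 x - h2 x) = \int[m]_x h1 x - \int[m]_x h2 x.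
Proof. by move=> b1 b2; apply: RintegralB => //; exact: bounded_measurable_integrable. Qed.

Lemma RintegralZl_bounded k h : bounded_measurable h ->
  \int[m]_x (k * h x) = k * \int[m]_x h x.
Proof. by move=> bh; apply: RintegralZl => //; exact: bounded_measurable_integrable. Qed.

Lemma le_Rintegral_bounded h1 h2 : bounded_measurable h1 -> bounded_measurable h2 ->
  (forall x, h1 x <= h2 x) -> \int[m]_x h1 x <= \int[m]_x h2 x.
Proof. by move=> b1 b2 h12; apply: le_Rintegral => //; exact: bounded_measurable_integrable. Qed.

Lemma RintegralN_bounded h : bounded_measurable h -> \int[m]_x (- h x) = - \int[m]_x h x.
Proof.
move=> bh; rewrite -[RHS]mulN1r -RintegralZl_bounded //.
by apply: eq_Rintegral => x _; rewrite mulN1r.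
Qed.

Lemma normr_Rintegral_le h k : bounded_measurable h -> bounded_measurable k ->
  (forall x, `|h x| <= k x) -> `|\int[m]_x h x| <= \int[m]_x k x.
Proof.
move=> bh bk hk; rewrite ler_norml -RintegralN_bounded //.
by apply/andP; split; apply: le_Rintegral_bounded; try bounded_measurable_tac;
  move=> x; have := hk x; rewrite ler_norml => /andP[]; rewrite // lerNl.
Qed.

Lemma Rintegral_subrM c h w : bounded_measurable h -> bounded_measurable w ->
  \int[m]_x ((c - h x) * w x) = c * \int[m]_x w x - \int[m]_x (h x * w x).
Proof.
move=> bh bw; rewrite -RintegralZl_bounded // -RintegralB_bounded; try bounded_measurable_tac.
by apply: eq_Rintegral => x _; rewrite mulrBl.
Qed.

Lemma wavg_dist_le h w c M : bounded_measurable h -> bounded_measurable w ->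
  (forall x, 0 <= w x) -> 0 < \int[m]_x w x -> (forall x, `|h x - c| <= M) ->
  `|\int[m]_x (h x * w x) / \int[m]_x w x - c| <= M.
Proof.
move=> bh bw w0 Iw hM.
have -> : \int[m]_x (h x * w x) / \int[m]_x w x - c =
    - \int[m]_x ((c - h x) * w x) / \int[m]_x w x.
  by rewrite Rintegral_subrM //; field; rewrite gt_eqF.
rewrite normrN normrM normfV (gtr0_norm Iw) ler_pdivrMr // -RintegralZl_bounded //.
apply: normr_Rintegral_le; try bounded_measurable_tac.
by move=> x; rewrite normrM (ger0_norm (w0 x)) distrC ler_wpM2r.
Qed.

End Rintegral_bounded.

Section reweight.
Context {R : realType} {dsp : measure_display} {T : measurableType dsp}.
Variables (mu : probability T R) (D : T -> R).
Hypotheses (D_ge0 : forall x, 0 <= D x) (bD : bounded_measurable D).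

Definition with_density (A : set T) := (\int[mu]_(x in A) (D x)%:E)%E.

Let intD : mu.-integrable setT (EFin \o D).
Proof. exact: bounded_measurable_integrable. Qed.

Let with_density0 : with_density set0 = 0%E.
Proof. by rewrite /with_density integral_set0. Qed.

Let with_density_ge0 A : (0 <= with_density A)%E.
Proof. by apply: integral_ge0 => x _; rewrite lee_fin. Qed.

Let with_density_sigma_additive : semi_sigma_additive with_density.
Proof.
move=> /= A mA tA mUA; rewrite /with_density integral_bigcup //; last exact: integrableS intD.
by apply: is_cvg_ereal_nneg_natsum_cond => n _ _; exact: with_density_ge0.
Qed.

HB.instance Definition _ := isMeasure.Build _ _ _ with_density
  with_density0 with_density_ge0 with_density_sigma_additive.

Let with_density_fin : fin_num_fun with_density.
Proof. by move=> A mA; apply: integrable_fin_num => //; exact: integrableS intD. Qed.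

HB.instance Definition _ := @Measure_isFinite.Build _ T _ with_density with_density_fin.

Let inv_mass_ge0 : 0 <= (\int[mu]_x D x)^-1.
Proof. by rewrite invr_ge0 Rintegral_ge0. Qed.

Let inv_mass : {nonneg R} := NngNum inv_mass_ge0.

(* By conversion: [fine] of the extended integral of [D] is its real integral. *)
Lemma reweight_mscale : reweight mu D = mscale inv_mass with_density.
Proof. by []. Qed.

Let reweight_dominated : mscale inv_mass with_density `<< mu.
Proof.
apply/null_content_dominatesP => A mA muA0.
rewrite /mscale /= /with_density null_set_integral ?mule0 //.
by apply/measurable_EFinP; apply: measurable_funTS; case: bD.
Qed.

Lemma integral_reweight f : bounded_measurable f ->
  (\int[reweight mu D]_x (f x)%:E)%E = ((\int[mu]_x (f x * D x)) / \int[mu]_x D x)%:E.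
Proof.
move=> bf; have [mf _] := bf; have [mD _] := bD.
rewrite reweight_mscale -(Radon_Nikodym_change_of_variables reweight_dominated) //;
  last exact: bounded_measurable_integrable.
transitivity (\int[mu]_x (f x * (inv_mass%:num * D x))%:E)%E.
  apply: ae_eq_integral => //.
  - apply: emeasurable_funM; first exact/measurable_EFinP.
    by apply: measurable_int; exact: Radon_Nikodym_integrable.
  - by apply/measurable_EFinP; apply: measurable_funM => //; exact: measurable_funM.
  under [X in ae_eq _ _ _ X]eq_fun do rewrite EFinM.
  apply: ae_eqe_mul2l; apply: integral_ae_eq => //.
  - exact: Radon_Nikodym_integrable.
  - by apply/measurable_EFinP; exact: measurable_funM.
  - move=> E _ mE; rewrite -Radon_Nikodym_integral //= /mscale /with_density.
    under eq_integral do rewrite EFinM.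
    by rewrite integralZl //; exact: integrableS intD.
rewrite integral_bounded_measurable; last by bounded_measurable_tac.
congr EFin; rewrite mulrC -RintegralZl_bounded; last by bounded_measurable_tac.
by apply: eq_Rintegral => x _; rewrite mulrCA.
Qed.

End reweight.

Section dist_set.
Context {R : realType} {dsp : measure_display} {T : measurableType dsp} {d : T -> T -> R}.
Hypotheses (dm : is_metric d) (hborel : @measurable _ T = <<s metric_open d >>).

Lemma metric_open_dist_set_gt (B : set T) (r : R) :
  metric_open d [set x | r%:E < dist_set d x B]%E.
Proof.
move=> x /= lt.
have [e e0 he] : exists2 e, 0 < e & ((r + 2 * e)%:E <= dist_set d x B)%E.
  move: lt; case: (dist_set d x B) => [s| |] //=; last by exists 1; rewrite ?leey.
  by rewrite lte_fin => rs; exists ((s - r) / 2); rewrite ?lee_fin ?divr_gt0 ?subr_gt0 //; lra.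
exists e => // y dxy; apply: (@lt_le_trans _ _ (r + e)%:E); first by rewrite lte_fin; lra.
apply/ereal_infP => _ [b Bb <-]; rewrite lee_fin.
have : ((r + 2 * e)%:E <= (d x b)%:E)%E by apply: le_trans he _; apply: ereal_inf_lbound; exists b.
by rewrite lee_fin; have := is_metric_triangle dm x y b; lra.
Qed.

Lemma measurable_dist_set_le (B : set T) (r : R) :
  measurable [set x | dist_set d x B <= r%:E]%E.
Proof.
rewrite -[X in measurable X]setCK; apply: measurableC; rewrite hborel.
apply: sub_sigma_algebra; rewrite (_ : ~` _ = [set x | r%:E < dist_set d x B]%E).
  exact: metric_open_dist_set_gt.
by apply/seteqP; split => x /=; rewrite ltNge => /negP.
Qed.

End dist_set.

Section reweighting.
Context {R : realType} {dsp : measure_display} {T : measurableType dsp} {d : T -> T -> R}.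
Hypotheses (dm : is_metric d) (hborel : @measurable _ T = <<s metric_open d >>).
Hypothesis hdiam : diameter_one d.
Context {mu pi : probability T R} {Dmu Dpi : T -> R}.
Hypotheses (Dmu01 : forall x, 0 <= Dmu x <= 1) (Dpi01 : forall x, 0 <= Dpi x <= 1).
Hypotheses (mDmu : measurable_fun setT Dmu) (mDpi : measurable_fun setT Dpi).
Context {eps1 eps2 rho : R}.
Hypothesis hW : (wass d mu pi <= eps1%:E)%E.
Hypothesis hsup : forall x, `|Dpi x - Dmu x| <= eps2.
Hypotheses (rho_gt0 : 0 < rho) (rho_le1 : rho <= 1).

Let bDmu : bounded_measurable Dmu. Proof. exact: bounded_measurable01. Qed.
Let bDpi : bounded_measurable Dpi. Proof. exact: bounded_measurable01. Qed.

Let d_le1 x y : d x y <= 1. Proof. by case: hdiam. Qed.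

Let bounded_measurable_lip {K h} : 0 < K -> dlipschitz d K h -> bounded_measurable h :=
  dlipschitz_bounded_measurable hborel hdiam.

Lemma wass_lip1 h : lip1 d h -> \int[mu]_x h x - \int[pi]_x h x <= eps1.
Proof.
move=> hl; have bh := bounded_measurable_lip ltr01 (lip1_dlipschitz hl).
rewrite -lee_fin; apply: le_trans hW; rewrite EFinB -!integral_bounded_measurable //.
by apply: ereal_sup_ubound; exists h.
Qed.

Lemma wass_dlipschitz {K h} : 0 < K -> dlipschitz d K h ->
  \int[mu]_x h x - \int[pi]_x h x <= K * eps1.
Proof.
move=> K0 hK; have bh := bounded_measurable_lip K0 hK.
have /wass_lip1 : lip1 d (fun x => K^-1 * h x) by exact: dlipschitz_lip1.
by rewrite !RintegralZl_bounded // -mulrBr ler_pdivrMl.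
Qed.

Let eps1_ge0 : 0 <= eps1.
Proof.
have := @wass_lip1 (fun=> 0); rewrite !Rintegral_cst_probability subrr; apply.
by move=> x y; rewrite subrr normr0 is_metric_ge0.
Qed.

Let eps2_ge0 : 0 <= eps2.
Proof. by have [_ /(_ 1 ltr01)[x0 _]] := hdiam; exact: le_trans (hsup x0). Qed.

Let rhoV_gt0 : 0 < rho^-1. Proof. by rewrite invr_gt0. Qed.

Let eps1_rho_ge0 : 0 <= eps1 / rho. Proof. by rewrite divr_ge0 // ltW. Qed.

Let A := A_rho d Dpi rho.
Let Abar := Abar_rho d Dpi rho.
Let G := lip_majorant d rho Dpi.
Let S := lip_majorant d rho (fun x => \1_A x : R).

Let indicA01 x : 0 <= (\1_A x : R) <= 1.
Proof. by rewrite indicE; case: (x \in A); rewrite /= ?ler01 ?lexx. Qed.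

Let bG : bounded_measurable G.
Proof. exact: bounded_measurable_lip rhoV_gt0 (dlipschitz_lip_majorant dm rho_gt0 Dpi01). Qed.

Let bS : bounded_measurable S.
Proof. exact: bounded_measurable_lip rhoV_gt0 (dlipschitz_lip_majorant dm rho_gt0 indicA01). Qed.

Let Dpi_le_majorant x : Dpi x <= G x := lip_majorant_ge dm rho_gt0 Dpi01 x.
Let majorant_le1 x : G x <= 1 := lip_majorant_le1 dm rho_gt0 Dpi01 x.

Lemma majorant_notin_A x : ~ A x -> G x = Dpi x.
Proof.
move=> nAx; apply/eqP; rewrite eq_le lip_majorant_ge // andbT.
apply: lip_majorant_le => y; rewrite lerBlDr leNgt; apply/negP => yx.
by apply: nAx; exists y.
Qed.

Lemma majorant_indic_in_A x : A x -> S x = 1.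
Proof.
move=> Ax; apply/eqP; rewrite eq_le lip_majorant_le1 //=.
by have := lip_majorant_ge dm rho_gt0 indicA01 x; rewrite indicE mem_set.
Qed.

Lemma majorant_indic_le_Abar x : S x <= \1_Abar x.
Proof.
rewrite indicE; case: (boolP (x \in Abar)) => [_|/negP xAbar]; first exact: lip_majorant_le1.
apply: lip_majorant_le => y; rewrite indicE; case: (boolP (y \in A)) => [/set_mem Ay|_].
  rewrite subr_le0 ler_pdivlMr // mul1r -lee_fin.
  have : (rho%:E < dist_set d x A)%E by rewrite ltNge; apply/negP => xA; apply: xAbar; rewrite inE.
  by move/ltW/le_trans; apply; apply: ereal_inf_lbound; exists y.
by rewrite sub0r oppr_le0 divr_ge0 ?is_metric_ge0 // ltW.
Qed.

Lemma norm_Dpi_sub_majorant x : `|Dpi x - G x| <= S x.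
Proof.
have [Ax|nAx] := pselect (A x); last first.
  by rewrite majorant_notin_A // subrr normr0 lip_majorant_ge0.
rewrite majorant_indic_in_A // distrC ger0_norm ?subr_ge0 //.
by have := majorant_le1 x; have /andP[] := Dpi01 x; lra.
Qed.

Lemma majorant_sub_majorant_indic_le x : G x - S x <= Dpi x.
Proof.
have [Ax|nAx] := pselect (A x); last first.
  by rewrite majorant_notin_A // lerBlDr lerDl lip_majorant_ge0.
by rewrite majorant_indic_in_A //; have := majorant_le1 x; have /andP[] := Dpi01 x; lra.
Qed.

Let P := fine (pi Abar).

Let mAbar : measurable Abar := measurable_dist_set_le dm hborel _ _.

Let P_ge0 : 0 <= P.
Proof. by rewrite /P fine_ge0. Qed.

Lemma Rintegral_majorant_indic_pi_le : \int[pi]_x S x <= P.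
Proof.
apply: (@le_trans _ _ (\int[pi]_x \1_Abar x)).
  apply: le_Rintegral_bounded => //; last exact: majorant_indic_le_Abar.
  by apply: bounded_measurable01 => [|x]; [exact: measurable_indic|rewrite indicE; case: (_ \in _); rewrite /= ?ler01 ?lexx].
by rewrite /Rintegral integral_indic // setIT.
Qed.

Lemma Rintegral_majorant_indic_mu_le : \int[mu]_x S x <= P + eps1 / rho.
Proof.
have := wass_dlipschitz rhoV_gt0 (dlipschitz_lip_majorant dm rho_gt0 indicA01).
by have := Rintegral_majorant_indic_pi_le; rewrite mulrC; lra.
Qed.

Lemma Rintegral_majorant_mu_ge : \int[pi]_x Dpi x - eps1 / rho <= \int[mu]_x G x.
Proof.
have := wass_dlipschitz rhoV_gt0 (dlipschitzN (dlipschitz_lip_majorant dm rho_gt0 Dpi01)).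
rewrite !RintegralN_bounded // mulrC.
have : \int[pi]_x Dpi x <= \int[pi]_x G x.
  exact: le_Rintegral_bounded.
lra.
Qed.

Lemma Rintegral_Dmu_ge :
  \int[pi]_x Dpi x - (2 * (eps1 / rho) + P + eps2) <= \int[mu]_x Dmu x.
Proof.
have GS : \int[mu]_x (G x - S x) <= \int[mu]_x Dpi x.
  by apply: le_Rintegral_bounded; try bounded_measurable_tac; exact: majorant_sub_majorant_indic_le.
have DD : \int[mu]_x (Dpi x - eps2) <= \int[mu]_x Dmu x.
  apply: le_Rintegral_bounded; try bounded_measurable_tac.
  by move=> x; have := hsup x; rewrite ler_norml => /andP[_]; lra.
rewrite !RintegralB_bounded ?Rintegral_cst_probability // in GS DD; try bounded_measurable_tac.
by have := Rintegral_majorant_indic_mu_le; have := Rintegral_majorant_mu_ge; lra.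
Qed.

Section delta_bounds.
Context {delta : R}.
Hypotheses (delta_gt0 : 0 < delta) (delta_le : delta <= \int[pi]_x Dpi x).

Let N_ge0 : 0 <= 3 * (eps1 / rho) + eps2 + 2 * P.
Proof. by have := P_ge0; have := eps2_ge0; have := eps1_rho_ge0; lra. Qed.

Lemma Rintegral_Dmu_gt0 : delta^-1 * (3 * (eps1 / rho) + eps2 + 2 * P) < 1 ->
  0 < \int[mu]_x Dmu x.
Proof.
rewrite mulrC ltr_pdivrMr // mul1r; move: delta_le.
by have := Rintegral_Dmu_ge; have := P_ge0; have := eps1_rho_ge0; lra.
Qed.

Section lip1_test_function.
Context {f : T -> R}.
Hypotheses (f_lip : lip1 d f) (Zmu_gt0 : 0 < \int[mu]_x Dmu x).

Let bf : bounded_measurable f := bounded_measurable_lip ltr01 (lip1_dlipschitz f_lip).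

Let a := \int[mu]_x (f x * Dmu x) / \int[mu]_x Dmu x.
Let b := \int[pi]_x (f x * Dpi x) / \int[pi]_x Dpi x.
Let g x := a - f x.

Let bg : bounded_measurable g.
Proof. by rewrite /g; bounded_measurable_tac. Qed.

Let norm_g_le1 x : `|g x| <= 1.
Proof.
apply: wavg_dist_le => // [y|y]; first by case/andP: (Dmu01 y).
exact: le_trans (f_lip y x) (d_le1 y x).
Qed.

Let gG_lip : dlipschitz d (2 / rho) (fun x => g x * G x).
Proof.
have G_le1 x : `|G x| <= 1 by rewrite ger0_norm ?lip_majorant_ge0.
have g_lip : dlipschitz d 1 g := dlipschitz_subl dm a (lip1_dlipschitz f_lip).
have G_lip := dlipschitz_lip_majorant dm rho_gt0 Dpi01.
move=> x y; apply: le_trans (dlipschitzM norm_g_le1 G_le1 g_lip G_lip x y) _.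
rewrite ler_wpM2r ?is_metric_ge0 // !mul1r.
have : 1 <= rho^-1 by rewrite invf_ge1.
lra.
Qed.

Lemma reweight_gap_mul_le :
  \int[pi]_x Dpi x * (a - b) <= 3 * (eps1 / rho) + eps2 + 2 * P.
Proof.
have Zpi_gt0 : 0 < \int[pi]_x Dpi x by exact: lt_le_trans delta_le.
have gap : \int[pi]_x Dpi x * (a - b) =
    \int[pi]_x (g x * Dpi x) - \int[mu]_x (g x * Dmu x).
  by rewrite /g !Rintegral_subrM // /a /b; field; rewrite !gt_eqF.
have split_pi : \int[pi]_x (g x * Dpi x) =
    \int[pi]_x (g x * G x) + \int[pi]_x (g x * (Dpi x - G x)).
  by rewrite -RintegralD_bounded; try bounded_measurable_tac; apply: eq_Rintegral => x _; ring.
have split_mu : \int[mu]_x (g x * Dmu x) = \int[mu]_x (g x * G x)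
    + \int[mu]_x (g x * (Dpi x - G x)) - \int[mu]_x (g x * (Dpi x - Dmu x)).
  rewrite -RintegralD_bounded -?RintegralB_bounded; try bounded_measurable_tac.
  by apply: eq_Rintegral => x _; ring.
have wass_gG : \int[pi]_x (g x * G x) - \int[mu]_x (g x * G x) <= 2 * (eps1 / rho).
  have K_gt0 : 0 < 2 / rho by rewrite divr_gt0.
  have := wass_dlipschitz K_gt0 (dlipschitzN gG_lip).
  by rewrite !RintegralN_bounded; try bounded_measurable_tac; rewrite mulrAC -mulrA opprK addrC.
have gE_le (m : probability T R) : `|\int[m]_x (g x * (Dpi x - G x))| <= \int[m]_x S x.
  apply: normr_Rintegral_le; try bounded_measurable_tac.
  move=> x; rewrite normrM -[S x]mul1r.
  by apply: ler_pM; rewrite ?normr_ge0 ?norm_g_le1 ?norm_Dpi_sub_majorant.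
have gD_le : `|\int[mu]_x (g x * (Dpi x - Dmu x))| <= eps2.
  rewrite -[eps2](Rintegral_cst_probability mu); apply: normr_Rintegral_le; try bounded_measurable_tac.
  by move=> x; rewrite normrM -[eps2]mul1r; apply: ler_pM.
move: (gE_le pi) (gE_le mu) gD_le; rewrite !ler_norml.
have := Rintegral_majorant_indic_pi_le; have := Rintegral_majorant_indic_mu_le.
lra.
Qed.

Lemma reweight_gap_le : a - b <= delta^-1 * (3 * (eps1 / rho) + eps2 + 2 * P).
Proof.
rewrite mulrC ler_pdivlMr //; have [ab_ge0|ab_lt0] := leP 0 (a - b).
  by apply: le_trans reweight_gap_mul_le; rewrite mulrC ler_wpM2r.
by apply: le_trans N_ge0; rewrite pmulr_lle0 // ltW.
Qed.

End lip1_test_function.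

End delta_bounds.

End reweighting.

Theorem lemma5p3 (R : realType) (dsp : measure_display) (T : measurableType dsp)
  (d : T -> T -> R)
  (hpolish : polish_metric d)
  (hborel : @measurable _ T = <<s metric_open d >>)
  (hdiam : diameter_one d)
  (mu pi : probability T R)
  (Dmu Dpi : T -> R)
  (hDmu01 : forall x, 0 <= Dmu x <= 1) (hDpi01 : forall x, 0 <= Dpi x <= 1)
  (hDmu_meas : measurable_fun setT Dmu) (hDpi_meas : measurable_fun setT Dpi)
  (delta eps1 eps2 : R) (hdelta : 0 < delta)
  (hint : (delta%:E <= \int[pi]_x (Dpi x)%:E)%E)
  (hW : (wass d mu pi <= eps1%:E)%E)
  (hsup : forall x, `|Dpi x - Dmu x| <= eps2)
  (rho : R) (hrho0 : 0 < rho) (hrho1 : rho <= 1) :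
  let rhs := ((delta^-1)%:E * ((3 * eps1 / rho + eps2)%:E
                + 2%:E * pi (Abar_rho d Dpi rho)))%E in
  ((0 < \int[mu]_x (Dmu x)%:E)%E ->
     (wass d (reweight mu Dmu) (reweight pi Dpi) <= rhs)%E)
  /\ ((rhs < 1%:E)%E -> (0 < \int[mu]_x (Dmu x)%:E)%E).
Proof.
move=> rhs; have [dm _ _] := hpolish.
have bDmu : bounded_measurable Dmu by exact: bounded_measurable01.
have bDpi : bounded_measurable Dpi by exact: bounded_measurable01.
have delta_le : delta <= \int[pi]_x Dpi x by rewrite -lee_fin -integral_bounded_measurable.
have -> : rhs = (delta^-1 * (3 * (eps1 / rho) + eps2
                  + 2 * fine (pi (Abar_rho d Dpi rho))))%:E.
  rewrite /rhs -[pi _]fineK; last exact/fin_num_measure/(measurable_dist_set_le dm hborel).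
  by rewrite mulrA !EFinM !EFinD !EFinM.
rewrite integral_bounded_measurable // !lte_fin; split => [Zmu_gt0|]; last first.
  exact: Rintegral_Dmu_gt0.
apply: ge_ereal_sup => _ [f f_lip <-].
have bf := dlipschitz_bounded_measurable hborel hdiam ltr01 (lip1_dlipschitz f_lip).
have Dmu_ge0 x : 0 <= Dmu x by case/andP: (hDmu01 x).
have Dpi_ge0 x : 0 <= Dpi x by case/andP: (hDpi01 x).
rewrite (integral_reweight _ _ Dmu_ge0) // (integral_reweight _ _ Dpi_ge0) //.
by rewrite -EFinB lee_fin; exact: reweight_gap_le.
Qed.
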